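(* Let $G=(V,E)$ be a finite simple graph and let $z:E\to[0,1]$ be any function. Then there is a function $x:E\to\{0,1\}$ such that for every vertex $v\in V$, $$\sum_{e\ni v}z(e)-1<\sum_{e\ni v}x(e)\le\sum_{e\ni v}z(e)+1,$$ where the sums range over the edges of $G$ incident with $v$. *)

From mathcomp Require Import all_boot all_order all_algebra.
Set Implicit Arguments. Unset Strict Implicit. Unset Printing Implicit Defensive.
Import Order.TTheory GRing.Theory Num.Theory.

Definition simple_graph (V : finType) (adj : rel V) : Prop :=
  symmetric adj /\ irreflexive adj.

Definition edges (V : finType) (adj : rel V) : {set {set V}} :=
  [set E : {set V} | [exists u, exists w, adj u w && (E == [set u; w])]].

From mathcomp Require Import all_boot all_order all_algebra.
From mathcomp Require Import lra zify.
Set Implicit Arguments. Unset Strict Implicit. Unset Printing Implicit Defensive.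
Import Order.TTheory GRing.Theory Num.Theory.
Local Open Scope ring_scope.

(* Iterative rounding.  Fix a(v) = floor of the load (weighted degree) of v;
   the invariant is  a(v) <= load(v) <= a(v) + 1.  While some edge is
   fractional (0 < z e < 1), move z along a nonzero direction d supported on
   the fractional edges as far as the box [0,1]^E allows, so that some
   fractional edge becomes integral.  d is a kernel vector of a linear system
   with fewer equations than fractional edges, fixing the load of every vertex
   with >= 2 fractional edges, except possibly one vertex with exactly 2,
   whose load moves in the harmless direction; the handshake bound (edges
   have at most two ends) makes the system small enough.  Vertices with <= 1
   fractional edge keep the invariant for free, and once no fractional edge
   is left z is the 0/1 rounding. *)

Lemma unit_nonfrac_bool (R : realFieldType) (r : R) :
  0 <= r <= 1 -> ~~ ((0 < r) && (r < 1)) -> r = (r == 1)%:R.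
Proof.
case/andP=> r_ge0 r_le1; case: eqP => [->//|/eqP r_neq1] r_nonfrac.
have : ~~ (0 < r) by apply: contra r_nonfrac => ->; rewrite lt_neqAle r_neq1.
by rewrite -leNgt => r_le0; apply/eqP; rewrite eq_le r_le0.
Qed.

Lemma sum_unit_bounds (R : realFieldType) (T : finType) (P : pred T) (f : T -> R) :
  (forall i, P i -> 0 <= f i <= 1) ->
  0 <= \sum_(i | P i) f i <= (\sum_(i | P i) 1)%N%:R.
Proof.
move=> f01; rewrite natr_sum; apply/andP; split.
  by apply: sumr_ge0 => i /f01 /andP [].
by apply: ler_sum => i /f01 /andP [].
Qed.

Lemma sum_frac_bounds (R : realFieldType) (T : finType) (P : pred T) (f : T -> R) :
  (0 < \sum_(i | P i) 1)%N -> (forall i, P i -> 0 < f i < 1) ->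
  0 < \sum_(i | P i) f i < (\sum_(i | P i) 1)%N%:R.
Proof.
move=> n_gt0 f01.
have P_ne0 : has P (index_enum T) by apply: contraTT n_gt0 => h; rewrite big_hasC.
rewrite natr_sum; apply/andP; split.
  have sum0 : \sum_(i | P i) (0 : R) = 0 by rewrite big1_eq.
  by rewrite -[X in X < _]sum0; apply: ltr_sum => // i /f01 /andP [].
by apply: ltr_sum => // i /f01 /andP [].
Qed.

Lemma nontrivial_kernel (F : fieldType) (I J : finType) (A : {set I}) (B : {set J})
  (M : I -> J -> F) : (#|B| < #|A|)%N ->
  exists u : I -> F, [/\ forall i, i \notin A -> u i = 0,
     exists2 i, i \in A & u i != 0 &
     forall j, j \in B -> \sum_(i in A) u i * M i j = 0].
Proof.
move=> BltA.
pose Mx : 'M[F]_(#|A|, #|B|) := \matrix_(k, l) M (enum_val k) (enum_val l).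
have ker_gt0 : (0 < \rank (kermx Mx))%N.
  by rewrite mxrank_ker subn_gt0; apply: leq_ltn_trans (rank_leq_col Mx) BltA.
have [r r_neq0] : exists r, row r (kermx Mx) != 0.
  apply/existsP; apply: contraTT ker_gt0; rewrite negb_exists => /forallP r0.
  rewrite lt0n negbK mxrank_eq0; apply/eqP/row_matrixP => i.
  by rewrite row0; apply/eqP; move: (r0 i); rewrite negbK.
pose w := row r (kermx Mx).
have w_ker : w *m Mx = 0 by rewrite /w -row_mul mulmx_ker row0.
have [k0 wk0] : exists k0, w 0 k0 != 0.
  apply/existsP; apply: contraTT r_neq0; rewrite negb_exists => /forallP w0.
  rewrite negbK; apply/eqP/rowP => k; rewrite [RHS]mxE; apply/eqP.
  by move: (w0 k); rewrite negbK.
pose u i := \sum_(k < #|A| | enum_val k == i) w 0 k.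
exists u; split.
- move=> i iNA; rewrite /u big_pred0 // => k; apply/negP => /eqP ek.
  by move: (enum_valP k); rewrite ek (negbTE iNA).
- exists (enum_val k0); first exact: enum_valP.
  by rewrite /u (big_pred1 k0) // => k /=; apply: (inj_eq enum_val_inj).
- move=> j jB.
  have := congr1 (fun m : 'rV_#|B| => m 0 (enum_rank_in jB j)) w_ker.
  rewrite !mxE => wMj0.
  rewrite -[RHS]wMj0 (partition_big (fun k => enum_val k) (mem A)) /=; last first.
    by move=> k _; apply: enum_valP.
  apply: eq_bigr => i iA; rewrite /u big_distrl /=.
  by apply: eq_bigr => k /eqP ki; rewrite /Mx !mxE enum_rankK_in // ki.
Qed.

Definition exit_time (R : realFieldType) (r s : R) : R :=
  if 0 < s then (1 - r) / s else r / (- s).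

Section ExitTime.
Variables (R : realFieldType) (r s : R).
Hypotheses (r_frac : 0 < r < 1) (s_neq0 : s != 0).

Lemma exit_time_gt0 : 0 < exit_time r s.
Proof.
case/andP: r_frac => r_gt0 r_lt1; rewrite /exit_time; case: ifP => s_pos.
  by apply: divr_gt0 => //; rewrite subr_gt0.
by apply: divr_gt0 => //; rewrite oppr_gt0 lt_neqAle s_neq0 leNgt s_pos.
Qed.

Lemma unit_before_exit (t : R) : 0 <= t <= exit_time r s -> 0 <= r + t * s <= 1.
Proof.
case/andP: r_frac => r_gt0 r_lt1; case/andP=> t_ge0.
rewrite /exit_time; case: ifP => s_pos t_le.
  rewrite ler_pdivlMr // in t_le.
  have : 0 <= t * s by rewrite mulr_ge0 // ltW.
  by move=> ts_ge0; apply/andP; split; lra.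
have s_neg : 0 < - s by rewrite oppr_gt0 lt_neqAle s_neq0 leNgt s_pos.
rewrite ler_pdivlMr // in t_le.
have : 0 <= t * - s by rewrite mulr_ge0 // ltW.
by move=> ts_ge0; apply/andP; split; lra.
Qed.

Lemma boundary_at_exit :
  (r + exit_time r s * s == 0) || (r + exit_time r s * s == 1).
Proof.
rewrite /exit_time; case: ifP => _; first by rewrite divfK // subrKC eqxx orbT.
by rewrite invrN mulrN mulNr divfK // subrr eqxx.
Qed.

End ExitTime.

(* The window is kept at a vertex with one fractional edge: with integral
   load K and fractional load c in (0,1), the window bound a must be K. *)
Lemma window_one_frac (R : realFieldType) (K a : nat) (c c' : R) :
  0 < c < 1 -> 0 <= c' <= 1 -> a%:R <= K%:R + c <= a%:R + 1 ->
  a%:R <= K%:R + c' <= a%:R + 1.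
Proof.
case/andP=> c_gt0 c_lt1 /andP [c'_ge0 c'_le1] /andP [lo hi].
have aK : a = K.
  have a_lt : (a < K.+1)%N by rewrite -(ltr_nat R) -natr1; lra.
  have K_lt : (K < a.+1)%N by rewrite -(ltr_nat R) -natr1; lra.
  by apply/eqP; rewrite eqn_leq -ltnS a_lt -ltnS K_lt.
by rewrite aK; apply/andP; split; lra.
Qed.

Lemma window_two_frac (R : realFieldType) (K a : nat) (c c' : R) :
  0 <= c' <= 2 -> a%:R <= K%:R + c <= a%:R + 1 ->
  (if (a <= K)%N then c' <= c else c <= c') ->
  a%:R <= K%:R + c' <= a%:R + 1.
Proof.
case/andP=> c'_ge0 c'_le2 /andP [lo hi]; case: leqP => aK c_c'.
  have aK' : a%:R <= K%:R :> R by rewrite ler_nat.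
  by apply/andP; split; lra.
have aK' : K%:R + 1 <= a%:R :> R by rewrite natr1 ler_nat.
by apply/andP; split; lra.
Qed.

Section IterativeRounding.
Variables (R : realFieldType) (V : finType) (Es : {set {set V}}).
Implicit Types (z d : {set V} -> R) (a : V -> nat) (v : V).

Definition frac_edges z := [set E in Es | (0 < z E) && (z E < 1)].
Definition load z v := \sum_(E in Es | v \in E) z E.
Definition frac_deg z v : nat := (\sum_(E in frac_edges z | v \in E) 1)%N.
Definition int_load z v : nat :=
  (\sum_(E in Es | (v \in E) && (E \notin frac_edges z)) nat_of_bool (z E == 1%R))%N.
Definition frac_sum z d v := \sum_(E in frac_edges z | v \in E) d E.

Definition admissible a z : Prop :=
  (forall E, E \in Es -> 0 <= z E <= 1) /\
  (forall v, (a v)%:R <= load z v <= (a v)%:R + 1).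

Lemma frac_edges_sub z : frac_edges z \subset Es.
Proof. by apply/subsetP => E; rewrite inE => /andP []. Qed.

Lemma load_frac_support z f v :
  (forall E, E \notin frac_edges z -> f E = 0) -> load f v = frac_sum z f v.
Proof.
move=> f0; rewrite /load (bigID (mem (frac_edges z))) /= [X in _ + X]big1 ?addr0.
  apply: eq_bigl => E; rewrite !inE.
  by case: (E \in Es); case: (v \in E); rewrite ?andbF ?andbT.
by move=> E /andP [_]; apply: f0.
Qed.

Lemma load_split z z' v :
  (forall E, E \in Es -> 0 <= z E <= 1) ->
  (forall E, E \notin frac_edges z -> z' E = z E) ->
  load z' v = (int_load z v)%:R + frac_sum z z' v.
Proof.
move=> z01 zz'; rewrite /load (bigID (mem (frac_edges z))) /= addrC; congr (_ + _).
  rewrite /int_load natr_sum; apply: eq_big => E; first by rewrite andbA.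
  case/andP=> /andP [EEs _] Efrac; rewrite zz' //.
  by apply: unit_nonfrac_bool (z01 E EEs) _; move: Efrac; rewrite inE EEs.
apply: eq_bigl => E; rewrite !inE.
by case: (E \in Es); case: (v \in E); rewrite ?andbF ?andbT.
Qed.

Lemma window_preserved a z z' v :
  (forall E, E \in Es -> 0 <= z E <= 1) ->
  (forall E, E \in Es -> 0 <= z' E <= 1) ->
  (forall E, E \notin frac_edges z -> z' E = z E) ->
  (a v)%:R <= load z v <= (a v)%:R + 1 ->
  [\/ load z' v = load z v, (frac_deg z v <= 1)%N |
      frac_deg z v = 2%N /\ (if (a v <= int_load z v)%N then load z' v <= load z v
                             else load z v <= load z' v)] ->
  (a v)%:R <= load z' v <= (a v)%:R + 1.
Proof.
move=> z01 z'01 zz' win.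
have box f : (forall E, E \in Es -> 0 <= f E <= 1) ->
    0 <= frac_sum z f v <= (frac_deg z v)%:R.
  move=> f01; apply: sum_unit_bounds => E; rewrite inE => /andP [/andP [EEs _] _].
  exact: f01.
rewrite !(load_split v z01 zz') (load_split v z01 (fun _ _ => erefl)) in win *.
case=> [/addrI -> //| | [deg2 dir]].
- rewrite leq_eqVlt ltnS leqn0 => /orP [] /eqP deg.
    (* one fractional edge: its weight under z lies in (0,1) *)
    apply: window_one_frac win; last by rewrite -[1]/(1%N%:R) -deg; apply: box.
    have := @sum_frac_bounds R _ (fun E => (E \in frac_edges z) && (v \in E)) z.
    rewrite -/(frac_deg z v) deg; apply=> // E.
    by rewrite inE => /andP [/andP [_ ->]].
  have /andP [s'_ge0 s'_le0] := box _ z'01; have /andP [s_ge0 s_le0] := box _ z01.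
  rewrite deg in s'_le0 s_le0.
  by have -> : frac_sum z z' v = frac_sum z z v by lra.
- apply: window_two_frac win _; first by rewrite -deg2; apply: box.
  by case: leqP dir => _; rewrite lerD2l.
Qed.

Lemma max_step z d :
  (forall E, E \in Es -> 0 <= z E <= 1) ->
  (forall E, E \notin frac_edges z -> d E = 0) ->
  (exists2 E, E \in frac_edges z & d E != 0) ->
  exists t : R, [/\ 0 < t, forall E, E \in Es -> 0 <= z E + t * d E <= 1 &
    exists2 E, E \in frac_edges z & (z E + t * d E == 0) || (z E + t * d E == 1)].
Proof.
move=> z01 d_supp [E0 E0frac dE0].
pose moving := [set E in frac_edges z | d E != 0].
pose exit E := exit_time (z E) (d E).
have frac_z E : E \in frac_edges z -> 0 < z E < 1 by rewrite inE => /andP [].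
have E0moving : E0 \in moving by rewrite inE E0frac.
have [Em /setIdP [Emfrac dEm] Emin] := arg_minP exit E0moving.
exists (exit Em); split.
- exact: exit_time_gt0 (frac_z _ Emfrac) dEm.
- move=> E EEs; have [Emov|Enmov] := boolP (E \in moving).
    have /setIdP [Efrac dE] := Emov.
    apply: (unit_before_exit (frac_z _ Efrac) dE).
    by rewrite Emin // ltW // exit_time_gt0 // frac_z.
  suff -> : d E = 0 by rewrite mulr0 addr0; apply: z01.
  have [Efrac|] := boolP (E \in frac_edges z); last exact: d_supp.
  by apply/eqP; move: Enmov; rewrite inE Efrac negbK.
- by exists Em => //; apply: boundary_at_exit.
Qed.

(* The condition on a direction d at v under which the load window of v
   survives any step along d (see window_preserved). *)
Definition safe_at a z d v : Prop :=
  [\/ frac_sum z d v = 0, (frac_deg z v <= 1)%N |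
      frac_deg z v = 2%N /\ (if (a v <= int_load z v)%N then frac_sum z d v <= 0
                             else 0 <= frac_sum z d v)].

Lemma step_along a z d :
  admissible a z ->
  (forall E, E \notin frac_edges z -> d E = 0) ->
  (exists2 E, E \in frac_edges z & d E != 0) ->
  (forall v, safe_at a z d v) ->
  exists z', admissible a z' /\ frac_edges z' \proper frac_edges z.
Proof.
move=> [z01 win] d_supp d_neq0 d_safe.
have [t [t_gt0 z'01 [E1 E1frac E1int]]] := max_step z01 d_supp d_neq0.
pose z' E := z E + t * d E.
have zz' E : E \notin frac_edges z -> z' E = z E.
  by move/d_supp; rewrite /z' => ->; rewrite mulr0 addr0.
have load_z' v : load z' v = load z v + t * frac_sum z d v.
  by rewrite /load /z' big_split /= -mulr_sumr -(load_frac_support v d_supp).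
exists z'; split; first split => // v.
  apply: (window_preserved z01 z'01 zz' (win v)); rewrite load_z'.
  case: (d_safe v) => [->|deg|[deg2 dir]]; [apply: Or31|apply: Or32|apply: Or33] => //.
  - by rewrite mulr0 addr0.
  - split=> //; case: ifP dir => _ dir.
      by rewrite gerDl mulr_ge0_le0 // ltW.
    by rewrite lerDl mulr_ge0 // ltW.
apply/properP; split.
  apply/subsetP => E; rewrite !inE => /andP [EEs E'frac]; rewrite EEs /=.
  by apply: contraTT E'frac => Enfrac; rewrite zz' ?inE ?EEs.
exists E1 => //; rewrite inE negb_and; apply/orP; right.
by case/orP: E1int; rewrite -/(z' E1) => /eqP ->; rewrite ?ltxx ?lt01 ?andbF.
Qed.

Lemma frac_kernel z (C : {set V}) :
  (#|C| < #|frac_edges z|)%N ->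
  exists d, [/\ forall E, E \notin frac_edges z -> d E = 0,
    exists2 E, E \in frac_edges z & d E != 0 &
    forall v, v \in C -> frac_sum z d v = 0].
Proof.
move=> small; have [d [d_supp d_neq0 d_ker]] :=
  nontrivial_kernel (fun (E : {set V}) (v : V) => (v \in E)%:R : R) small.
exists d; split=> // v vC; rewrite -(d_ker v vC) /frac_sum big_mkcondr /=.
by apply: eq_bigr => E _; case: (v \in E); rewrite ?mulr1 ?mulr0.
Qed.

Definition heavy z := [set v | (1 < frac_deg z v)%N].

Hypothesis small_edges : forall E, E \in Es -> (#|E| <= 2)%N.

(* Handshake bound: each fractional edge has at most two ends. *)
Lemma frac_handshake z : (\sum_v frac_deg z v <= 2 * #|frac_edges z|)%N.
Proof.
rewrite /frac_deg; under eq_bigr => v _ do rewrite big_mkcondr /=.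
rewrite exchange_big /= mulnC -sum_nat_const; apply: leq_sum => E Efrac.
by rewrite -big_mkcond /= sum1_card small_edges // (subsetP (frac_edges_sub z)).
Qed.

Lemma heavy_frac_deg z :
  (\sum_(v in heavy z) frac_deg z v <= 2 * #|frac_edges z|)%N.
Proof.
apply: leq_trans (frac_handshake z).
by rewrite [X in (_ <= X)%N](bigID (mem (heavy z))) leq_addr.
Qed.

Lemma heavy_card z : (#|heavy z| <= #|frac_edges z|)%N.
Proof.
rewrite -(leq_pmul2l (isT : 0 < 2)%N); apply: leq_trans (heavy_frac_deg z).
by rewrite mulnC -sum_nat_const; apply: leq_sum => v; rewrite inE.
Qed.

Lemma heavy_deg2 z :
  frac_edges z != set0 -> (#|frac_edges z| <= #|heavy z|)%N ->
  exists2 v0, v0 \in heavy z & frac_deg z v0 = 2%N.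
Proof.
move=> frac_ne0 many_heavy.
suff /exists_inP [v0 v0h /eqP deg2] : [exists v0 in heavy z, frac_deg z v0 == 2%N].
  by exists v0.
apply: contraTT frac_ne0 => /exists_inPn deg_ne2; rewrite negbK -cards_eq0.
have heavy3 : (3 * #|heavy z| <= \sum_(v in heavy z) frac_deg z v)%N.
  rewrite mulnC -sum_nat_const; apply: leq_sum => v vh.
  by move: (deg_ne2 v vh) (vh); rewrite inE => /eqP ne2 gt1; lia.
have := heavy_frac_deg z; lia.
Qed.

Lemma safe_direction a z :
  frac_edges z != set0 ->
  exists d, [/\ forall E, E \notin frac_edges z -> d E = 0,
    exists2 E, E \in frac_edges z & d E != 0 & forall v, safe_at a z d v].
Proof.
move=> frac_ne0.
have light v : v \notin heavy z -> (frac_deg z v <= 1)%N by rewrite inE -leqNgt.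
have [few_heavy|many_heavy] := ltnP #|heavy z| #|frac_edges z|.
  (* keep the loads of all heavy vertices fixed *)
  have [d [d_supp d_neq0 d_ker]] := frac_kernel few_heavy.
  exists d; split=> // v; have [vh|vl] := boolP (v \in heavy z).
    by apply: Or31; apply: d_ker.
  by apply: Or32; apply: light.
(* fix all heavy loads but that of a vertex v0 of fractional degree 2,
   whose load is then pushed in its safe direction by choosing the sign *)
have [v0 v0h deg2] := heavy_deg2 frac_ne0 many_heavy.
have few : (#|heavy z :\ v0| < #|frac_edges z|)%N.
  by move: (cardsD1 v0 (heavy z)) (heavy_card z); rewrite v0h /=; lia.
have [d [d_supp [E Efrac dE] d_ker]] := frac_kernel few.
pose sgn : R := if (a v0 <= int_load z v0)%N then
                  (if frac_sum z d v0 <= 0 then 1 else -1)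
                else (if 0 <= frac_sum z d v0 then 1 else -1).
have sgn_neq0 : sgn != 0 by rewrite /sgn; do 2 case: ifP => _; rewrite ?oppr_eq0 ?oner_eq0.
exists (fun E => sgn * d E); split.
- by move=> E' E'frac; rewrite d_supp // mulr0.
- by exists E => //; rewrite mulf_neq0.
move=> v; rewrite /safe_at /frac_sum -mulr_sumr -/(frac_sum z d v).
have [->|vv0] := eqVneq v v0.
  apply: Or33; split=> //; rewrite /sgn.
  case: leqP => _; case: ifP => s_sgn; rewrite ?mul1r ?mulN1r //.
    by rewrite oppr_le0 ltW // ltNge s_sgn.
  by rewrite oppr_ge0 ltW // ltNge s_sgn.
have [vh|vl] := boolP (v \in heavy z).
  by apply: Or31; rewrite d_ker ?mulr0 // in_setD1 vv0 vh.
by apply: Or32; apply: light.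
Qed.

Lemma integral_rounding a z :
  admissible a z -> frac_edges z = set0 ->
  exists x : {set V} -> bool, forall v,
    (a v)%:R <= \sum_(E in Es | v \in E) ((x E)%:R : R) <= (a v)%:R + 1.
Proof.
move=> [z01 win] frac0; exists (fun E => z E == 1) => v.
suff -> : \sum_(E in Es | v \in E) ((z E == 1)%:R : R) = load z v by apply: win.
apply: eq_bigr => E /andP [EEs _]; symmetry; apply: unit_nonfrac_bool (z01 E EEs) _.
have : E \notin frac_edges z by rewrite frac0 in_set0.
by rewrite inE EEs.
Qed.

Lemma admissible_rounding a z :
  admissible a z ->
  exists x : {set V} -> bool, forall v,
    (a v)%:R <= \sum_(E in Es | v \in E) ((x E)%:R : R) <= (a v)%:R + 1.
Proof.
move: {2}#|frac_edges z| (leqnn #|frac_edges z|) => n.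
elim: n z => [|n IH] z nfrac adm.
  by apply: integral_rounding adm _; apply/eqP; rewrite -cards_eq0 -leqn0.
have [frac0|frac_ne0] := eqVneq (frac_edges z) set0.
  exact: integral_rounding adm frac0.
have [d [d_supp d_neq0 d_safe]] := safe_direction a frac_ne0.
have [z' [adm' fewer]] := step_along adm d_supp d_neq0 d_safe.
by apply: IH adm'; have := proper_card fewer; lia.
Qed.

End IterativeRounding.

Lemma nat_floor (R : realFieldType) (s : R) (N : nat) :
  0 <= s -> s < N%:R -> exists n : nat, n%:R <= s < n%:R + 1.
Proof.
move=> s_ge0 s_ltN.
have below : exists i : nat, i%:R <= s by exists 0%N.
have bounded i : i%:R <= s -> (i <= N)%N.
  by move=> i_le; apply: ltnW; rewrite -(ltr_nat R); apply: le_lt_trans s_ltN.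
have [n n_le n_max] := ex_maxnP below bounded.
exists n; rewrite n_le /= ltNge; apply/negP => Sn_le.
by have := n_max n.+1; rewrite -natr1 => /(_ Sn_le); rewrite ltnn.
Qed.

Lemma unit_sum_floor (R : realFieldType) (T : finType) (P : pred T) (f : T -> R) :
  (forall i, P i -> 0 <= f i <= 1) ->
  exists n : nat, n%:R <= \sum_(i | P i) f i < n%:R + 1.
Proof.
move=> f01; have /andP [sum_ge0 sum_le] := sum_unit_bounds f01.
apply: (nat_floor (N := (\sum_(i | P i) 1)%N.+1)) => //.
by rewrite -natr1; apply: le_lt_trans sum_le _; rewrite ltrDl ltr01.
Qed.

Lemma edge_card_le2 (V : finType) (adj : rel V) E : E \in edges adj -> (#|E| <= 2)%N.
Proof.
rewrite inE => /existsP [u /existsP [w /andP [_ /eqP ->]]].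
by rewrite cards2; case: (u != w).
Qed.

Unset Implicit Arguments.

(* Round each load down to an integer a(v); z is then admissible for the
   windows [a(v), a(v)+1], iterative rounding gives x with loads in the same
   windows, and a(v) <= load(v) < a(v) + 1 yields the two inequalities. *)
Theorem lemma4p1 (R : realFieldType) (V : finType) (adj : rel V)
  (hG : simple_graph adj) (z : {set V} -> R)
  (hz : forall E, E \in edges adj -> 0 <= z E <= 1) :
  exists x : {set V} -> bool,
    forall v : V,
      \sum_(E in edges adj | v \in E) z E - 1
        < \sum_(E in edges adj | v \in E) (x E)%:R
      /\ \sum_(E in edges adj | v \in E) (x E)%:R
        <= \sum_(E in edges adj | v \in E) z E + 1.
Proof.
have floors v : exists n : nat, n%:R <= load (edges adj) z v < n%:R + 1.
  by apply: unit_sum_floor => E /andP [EE _]; apply: hz.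
have [a a_floor] := fin_all_exists floors.
have adm : admissible (edges adj) a z.
  by split=> // v; have /andP [lo hi] := a_floor v; rewrite lo ltW.
have [x x_win] := admissible_rounding (@edge_card_le2 V adj) adm.
exists x => v; have /andP [lo hi] := a_floor v; have /andP [xlo xhi] := x_win v.
by rewrite /load in lo hi; split; lra.
Qed.
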